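(* Let $m,n\geq 2$. There does not exist a Borel-Turing computable function $G:\mathbb{C}^{m\times n}\to\mathbb{C}^{n\times m}$ such that, setting $A_0=G(A)$ and $A_k=2A_{k-1}-A_{k-1}AA_{k-1}$ for $k\in\mathbb{N}$, the sequence $(A_k)_{k}$ converges effectively to $A^\dagger$, i.e., such that there exists a recursive function $e:\mathbb{N}\to\mathbb{N}$ with $\|A^\dagger-A_k\|_2\le 2^{-N}$ for every (computable) $A\in\mathbb{C}^{m\times n}$, every $N\in\mathbb{N}$ and every $k\ge e(N)$.
   Context: $A^\dagger\in\mathbb{C}^{n\times m}$ is the Moore–Penrose pseudoinverse of $A\in\mathbb{C}^{m\times n}$ (the unique matrix with $AA^\dagger A=A$, $A^\dagger AA^\dagger=A^\dagger$, $(AA^\dagger)^H=AA^\dagger$, $(A^\dagger A)^H=A^\dagger A$); $\|\cdot\|_2$ is the spectral norm. A real number $x$ is computable if there is a sequence $r_k=(-1)^{s(k)}a(k)/b(k)$ with recursive $a,b,s$, $b(k)\ne0$, such that $|r_k-x|\le2^{-k}$ for all $k$; such a sequence is a representation of $x$. Complex numbers/matrices are computable if the real and imaginary parts of all entries are; a representation of such an object consists of representations of these parts. A function $G$ defined on computable inputs with computable outputs is Borel-Turing computable if there is a Turing machine that transforms each representation of any input $x$ into a representation of $G(x)$. *)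

From HB Require Import structures.
From mathcomp Require Import all_boot all_order all_algebra.
From mathcomp Require Import boolp classical_sets reals.
From mathcomp Require Import complex.
Set Implicit Arguments. Unset Strict Implicit. Unset Printing Implicit Defensive.
Import Order.TTheory GRing.Theory Num.Theory.
Local Open Scope ring_scope.

(* Model of computation: (partial) mu-recursive functions with an oracle.    *)
(* The oracle o t c k is queried by the instruction Orc on the first three   *)
(* arguments; it gives the machine read access to an input representation   *)
(* (component c in {0,1,2} = (a,b,s) of real number number t, at index k).   *)
Inductive prog : Type :=
| Zero
| Succ
| Proj of nat
| Orc
| Comp of prog & list prog
| Prim of prog & prog
| Mu of prog.

Inductive eval (o : nat -> nat -> nat -> nat) : prog -> seq nat -> nat -> Prop :=
| ev_zero xs : eval o Zero xs 0
| ev_succ x xs : eval o Succ (x :: xs) x.+1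
| ev_proj i xs : eval o (Proj i) xs (nth 0%N xs i)
| ev_orc t c k xs : eval o Orc [:: t, c, k & xs] (o t c k)
| ev_comp f gs xs ys y :
    evals o gs xs ys -> eval o f ys y -> eval o (Comp f gs) xs y
| ev_prim0 f g xs y : eval o f xs y -> eval o (Prim f g) (0%N :: xs) y
| ev_primS f g n xs r y :
    eval o (Prim f g) (n :: xs) r -> eval o g [:: n, r & xs] y ->
    eval o (Prim f g) (n.+1 :: xs) y
| ev_mu f xs n :
    eval o f (n :: xs) 0 ->
    (forall i, (i < n)%N -> exists v, eval o f (i :: xs) v.+1) ->
    eval o (Mu f) xs n
with evals (o : nat -> nat -> nat -> nat) : list prog -> seq nat -> seq nat -> Prop :=
| evs_nil xs : evals o nil xs nil
| evs_cons g gs xs y ys :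
    eval o g xs y -> evals o gs xs ys -> evals o (g :: gs) xs (y :: ys).

Definition no_oracle : nat -> nat -> nat -> nat := fun _ _ _ => 0%N.

Definition recursive (f : nat -> nat) : Prop :=
  exists p : prog, forall x : nat, eval no_oracle p [:: x] (f x).

Definition rat_val {R : realType} (a b s : nat) : R :=
  (-1) ^+ s * a%:R / b%:R.

Definition real_rep {R : realType} (x : R) (a b s : nat -> nat) : Prop :=
  [/\ recursive a, recursive b, recursive s,
      (forall k, b k <> 0%N) &
      (forall k, `|rat_val (a k) (b k) (s k) - x| <= 2%:R ^- k)].

Definition computable_real {R : realType} (x : R) : Prop :=
  exists a b s, real_rep x a b s.

Definition re_idx (n i j : nat) : nat := (2 * (i * n + j))%N.
Definition im_idx (n i j : nat) : nat := (2 * (i * n + j)).+1%N.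

(* rho t c k: component c (0 = a, 1 = b, 2 = s) at index k of the representation
   of the t-th real number (t = re_idx / im_idx); unused slots are 0. *)
Definition mx_rep {R : realType} {m n : nat} (A : 'M[R[i]]_(m, n))
    (rho : nat -> nat -> nat -> nat) : Prop :=
  [/\ (forall (i : 'I_m) (j : 'I_n),
         real_rep (complex.Re (A i j)) (rho (re_idx n i j) 0%N) (rho (re_idx n i j) 1%N)
                                (rho (re_idx n i j) 2%N)),
      (forall (i : 'I_m) (j : 'I_n),
         real_rep (complex.Im (A i j)) (rho (im_idx n i j) 0%N) (rho (im_idx n i j) 1%N)
                                (rho (im_idx n i j) 2%N)) &
      (forall t c k, ((2 * (m * n) <= t)%N \/ (3 <= c)%N) -> rho t c k = 0%N)].

Definition computable_mx {R : realType} {m n : nat} (A : 'M[R[i]]_(m, n)) : Prop :=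
  exists rho, mx_rep A rho.

Definition BT_computable {R : realType} {m n p q : nat}
    (G : 'M[R[i]]_(m, n) -> 'M[R[i]]_(p, q)) : Prop :=
  exists P : prog, forall (A : 'M[R[i]]_(m, n)) rho, mx_rep A rho ->
    exists sigma : nat -> nat -> nat -> nat,
      (forall t c k, eval rho P [:: t; c; k] (sigma t c k)) /\ mx_rep (G A) sigma.

Definition cconj {R : realType} (z : R[i]) : R[i] := Complex (complex.Re z) (- complex.Im z).

Definition ctrmx {R : realType} {m n : nat} (A : 'M[R[i]]_(m, n)) : 'M[R[i]]_(n, m) :=
  map_mx cconj A^T.

Definition is_MP_pinv {R : realType} {m n : nat}
    (A : 'M[R[i]]_(m, n)) (X : 'M[R[i]]_(n, m)) : Prop :=
  [/\ A *m X *m A = A, X *m A *m X = X,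
      ctrmx (A *m X) = A *m X & ctrmx (X *m A) = X *m A].

Definition pinv {R : realType} {m n : nat} (A : 'M[R[i]]_(m, n)) : 'M[R[i]]_(n, m) :=
  xget 0 [set X | is_MP_pinv A X].

Definition vnorm2 {R : realType} {n : nat} (v : 'cV[R[i]]_n) : R :=
  Num.sqrt (\sum_(i < n) ((complex.Re (v i 0)) ^+ 2 + (complex.Im (v i 0)) ^+ 2)).

Definition specnorm {R : realType} {m n : nat} (M : 'M[R[i]]_(m, n)) : R :=
  sup [set vnorm2 (M *m v) | v in [set v : 'cV[R[i]]_n | vnorm2 v = 1]].

Fixpoint newton_iter {R : realType} {m n : nat} (A : 'M[R[i]]_(m, n))
    (X0 : 'M[R[i]]_(n, m)) (k : nat) : 'M[R[i]]_(n, m) :=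
  match k with
  | 0%N => X0
  | k'.+1 => let X := newton_iter A X0 k' in 2%:R *: X - X *m A *m X
  end.

From HB Require Import structures.
From mathcomp Require Import all_boot all_order all_algebra.
From mathcomp Require Import boolp classical_sets reals.
From mathcomp Require Import complex.
From mathcomp Require Import lra zify.
Set Implicit Arguments.
Unset Strict Implicit.
Unset Printing Implicit Defensive.
Import Order.TTheory GRing.Theory Num.Theory.

(* A Borel-Turing machine reads only finitely much of its input before it
   outputs the 0-th approximation of an entry of G(A). Run on the canonical name
   of the zero matrix, it thus fixes a bound |G(A)_00| <= B for every A having a
   name that agrees with that name up to some precision K. The matrix
   A = 2^-M E_00 with M >= K has such a name, and on it the Newton-Schulz
   iteration acts on the (0,0) entry as the scalar map x |-> 2x - 2^-M x^2, which
   at most triples |x| while 2^-M |x| <= 1. After k = e(1) steps that entry is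
   therefore at most 3^k B in modulus, while the (0,0) entry of A^+ is 2^M; once
   2^M >= 3^k B + 1 the spectral-norm error is at least 1 > 2^-1. *)

Section EvalInd.
Variable o : nat -> nat -> nat -> nat.
Variable P : prog -> seq nat -> nat -> Prop.
Variable Ps : seq prog -> seq nat -> seq nat -> Prop.
Hypothesis P_zero : forall xs, P Zero xs 0.
Hypothesis P_succ : forall x xs, P Succ (x :: xs) x.+1.
Hypothesis P_proj : forall i xs, P (Proj i) xs (nth 0 xs i).
Hypothesis P_orc : forall t c k xs, P Orc [:: t, c, k & xs] (o t c k).
Hypothesis P_comp : forall f gs xs ys y,
  evals o gs xs ys -> Ps gs xs ys -> eval o f ys y -> P f ys y -> P (Comp f gs) xs y.
Hypothesis P_prim0 : forall f g xs y,
  eval o f xs y -> P f xs y -> P (Prim f g) (0 :: xs) y.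
Hypothesis P_primS : forall f g n xs r y,
  eval o (Prim f g) (n :: xs) r -> P (Prim f g) (n :: xs) r ->
  eval o g [:: n, r & xs] y -> P g [:: n, r & xs] y -> P (Prim f g) (n.+1 :: xs) y.
Hypothesis P_mu : forall f xs n,
  eval o f (n :: xs) 0 -> P f (n :: xs) 0 ->
  (forall i, i < n -> exists v, eval o f (i :: xs) v.+1 /\ P f (i :: xs) v.+1) ->
  P (Mu f) xs n.
Hypothesis Ps_nil : forall xs, Ps [::] xs [::].
Hypothesis Ps_cons : forall g gs xs y ys,
  eval o g xs y -> P g xs y -> evals o gs xs ys -> Ps gs xs ys -> Ps (g :: gs) xs (y :: ys).

(* The generated induction scheme has no hypothesis for the premises of [ev_mu]
   nested under the existential quantifier. *)
Fixpoint eval_nested_ind {p xs v} (H : eval o p xs v) {struct H} : P p xs v :=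
  match H in eval _ p xs v return P p xs v with
  | ev_zero xs => P_zero xs
  | ev_succ x xs => P_succ x xs
  | ev_proj i xs => P_proj i xs
  | ev_orc t c k xs => P_orc t c k xs
  | ev_comp _ _ _ _ _ Hs Hf =>
      @P_comp _ _ _ _ _ Hs (evals_nested_ind Hs) Hf (eval_nested_ind Hf)
  | ev_prim0 _ _ _ _ Hf => @P_prim0 _ _ _ _ Hf (eval_nested_ind Hf)
  | ev_primS _ _ _ _ _ _ Hr Hg =>
      @P_primS _ _ _ _ _ _ Hr (eval_nested_ind Hr) Hg (eval_nested_ind Hg)
  | ev_mu _ _ _ H0 Hlt => @P_mu _ _ _ H0 (eval_nested_ind H0)
      (fun i hi => let: ex_intro v Hv := Hlt i hi in
                   ex_intro _ v (conj Hv (eval_nested_ind Hv)))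
  end
with evals_nested_ind {gs xs ys} (H : evals o gs xs ys) {struct H} : Ps gs xs ys :=
  match H in evals _ gs xs ys return Ps gs xs ys with
  | evs_nil xs => Ps_nil xs
  | evs_cons _ _ _ _ _ Hg Hgs =>
      @Ps_cons _ _ _ _ _ Hg (eval_nested_ind Hg) Hgs (evals_nested_ind Hgs)
  end.

End EvalInd.

Lemma eval_functional o p xs v v' : eval o p xs v -> eval o p xs v' -> v = v'.
Proof.
move=> H; move: p xs v H v'.
apply: (@eval_nested_ind o (fun p xs v => forall v', eval o p xs v' -> v = v')
  (fun gs xs ys => forall ys', evals o gs xs ys' -> ys = ys')).
- by move=> xs v' H; inversion H.
- by move=> x xs v' H; inversion H.
- by move=> i xs v' H; inversion H.
- by move=> t c k xs v' H; inversion H.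
- move=> f gs xs ys y _ IHgs _ IHf v' H; inversion H; subst.
  match goal with Hgs : evals _ _ _ _ |- _ => have E := IHgs _ Hgs end; subst.
  match goal with Hf : eval _ _ _ _ |- _ => exact: IHf _ Hf end.
- by move=> f g xs y _ IH v' H; inversion H; subst; exact: IH.
- move=> f g n xs r y _ IHr _ IHg v' H; inversion H; subst.
  match goal with Hr : eval _ (Prim _ _) _ _ |- _ => have E := IHr _ Hr end; subst.
  match goal with Hg : eval _ g _ _ |- _ => exact: IHg _ Hg end.
- move=> f xs n _ IH0 Hlt v' H; inversion H; subst.
  case: (ltngtP n v') => // [lt_nv|lt_vn].
  + match goal with Hlt' : forall i, _ -> exists _, _ |- _ =>
      have [w Hw] := Hlt' _ lt_nv end.
    by have := IH0 _ Hw.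
  + have [w [_ IHw]] := Hlt _ lt_vn.
    match goal with H0 : eval _ f _ 0 |- _ => by have := IHw _ H0 end.
- by move=> xs ys' H; inversion H.
- move=> g gs xs y ys _ IHg _ IHgs ys' H; inversion H; subst.
  match goal with Hgs : evals _ _ _ _ |- _ => rewrite (IHgs _ Hgs) end.
  match goal with Hg : eval _ _ _ _ |- _ => by rewrite (IHg _ Hg) end.
Qed.

Definition agree_below (K : nat) (o o' : nat -> nat -> nat -> nat) : Prop :=
  forall t c k, t < K -> c < K -> k < K -> o' t c k = o t c k.

Lemma agree_below_le K K' o o' : K <= K' -> agree_below K' o o' -> agree_below K o o'.
Proof. by move=> le_KK' H t c k ? ? ?; apply: H; exact: leq_trans le_KK'. Qed.

Lemma eval_use o p xs v : eval o p xs v ->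
  exists K, forall o', agree_below K o o' -> eval o' p xs v.
Proof.
move: p xs v.
apply: (@eval_nested_ind o
  (fun p xs v => exists K, forall o', agree_below K o o' -> eval o' p xs v)
  (fun gs xs ys => exists K, forall o', agree_below K o o' -> evals o' gs xs ys)).
- by move=> xs; exists 0 => o' _; constructor.
- by move=> x xs; exists 0 => o' _; constructor.
- by move=> i xs; exists 0 => o' _; constructor.
- move=> t c k xs; exists (maxn t (maxn c k)).+1 => o' Ha.
  by rewrite -Ha; [exact: ev_orc | lia | lia | lia].
- move=> f gs xs ys y _ [K1 H1] _ [K2 H2]; exists (maxn K1 K2) => o' Ha.
  apply: ev_comp; [apply: H1 | apply: H2];
    apply: agree_below_le Ha; [exact: leq_maxl | exact: leq_maxr].
- by move=> f g xs y _ [K H]; exists K => o' Ha; apply: ev_prim0; exact: H.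
- move=> f g n xs r y _ [K1 H1] _ [K2 H2]; exists (maxn K1 K2) => o' Ha.
  apply: ev_primS; [apply: H1 | apply: H2];
    apply: agree_below_le Ha; [exact: leq_maxl | exact: leq_maxr].
- move=> f xs n _ [K0 H0] Hlt.
  have /choice[Kw HKw] : forall i : 'I_n, exists Kw : nat * nat,
      forall o', agree_below Kw.1 o o' -> eval o' f (nat_of_ord i :: xs) Kw.2.+1.
    by move=> i; have [w [_ [K HK]]] := Hlt i (ltn_ord i); exists (K, w).
  set K := maxn K0 (\max_i (Kw i).1).
  have le_KwK i : (Kw i).1 <= K by rewrite leq_max leq_bigmax orbT.
  exists K => o' Ha; apply: ev_mu.
    by apply: H0; apply: agree_below_le Ha; exact: leq_maxl.
  move=> i lt_in; exists (Kw (Ordinal lt_in)).2.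
  by apply: (HKw (Ordinal lt_in)); exact: agree_below_le Ha.
- by move=> xs; exists 0 => o' _; constructor.
- move=> g gs xs y ys _ [K1 H1] _ [K2 H2]; exists (maxn K1 K2) => o' Ha.
  apply: evs_cons; [apply: H1 | apply: H2];
    apply: agree_below_le Ha; [exact: leq_maxl | exact: leq_maxr].
Qed.

Lemma eval_use_fin (I : finType) o p (xs : I -> seq nat) (v : I -> nat) :
  (forall i, eval o p (xs i) (v i)) ->
  exists K, forall o', agree_below K o o' -> forall i, eval o' p (xs i) (v i).
Proof.
move=> Hev; have [K HK] := choice (fun i => eval_use (Hev i)).
exists (\max_i K i) => o' Ha i; apply: HK; exact: agree_below_le (@leq_bigmax _ K i) Ha.
Qed.

Fixpoint const_prog (C : nat) : prog :=
  if C is C'.+1 then Comp Succ [:: const_prog C'] else Zero.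

Definition pred_prog : prog := Prim Zero (Proj 0).

Definition monus_prog (M : nat) : prog := Prim (const_prog M) (Comp pred_prog [:: Proj 1]).

Definition ifz_prog (C D : nat) : prog := Prim (const_prog C) (const_prog D).

Definition step_prog (M C D : nat) : prog := Comp (ifz_prog C D) [:: monus_prog M].

Lemma eval_const o C xs : eval o (const_prog C) xs C.
Proof.
elim: C => [|C IH] /=; first exact: ev_zero.
apply: (ev_comp (ys := [:: C])); last exact: ev_succ.
by apply: evs_cons; [exact: IH | exact: evs_nil].
Qed.

Lemma eval_pred o x : eval o pred_prog [:: x] x.-1.
Proof.
elim: x => [|x IH]; first by apply: ev_prim0; exact: ev_zero.
by apply: ev_primS; [exact: IH | exact: (ev_proj o 0 [:: x; x.-1])].
Qed.

Lemma eval_monus o M k : eval o (monus_prog M) [:: k] (M - k).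
Proof.
elim: k => [|k IH]; first by rewrite subn0; apply: ev_prim0; exact: eval_const.
apply: ev_primS; first exact: IH.
apply: (ev_comp (ys := [:: M - k])).
  by apply: evs_cons; [exact: (ev_proj o 1 [:: k; M - k]) | exact: evs_nil].
by rewrite subnS; exact: eval_pred.
Qed.

Lemma eval_ifz o C D x : eval o (ifz_prog C D) [:: x] (if x is 0 then C else D).
Proof.
elim: x => [|x IH]; first by apply: ev_prim0; exact: eval_const.
by apply: ev_primS; [exact: IH | exact: eval_const].
Qed.

Lemma eval_step o M C D k : eval o (step_prog M C D) [:: k] (if M <= k then C else D).
Proof.
apply: (ev_comp (ys := [:: M - k])).
  by apply: evs_cons; [exact: eval_monus | exact: evs_nil].
by rewrite -subn_eq0; case: (M - k) (eval_ifz o C D (M - k)).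
Qed.

Lemma recursive_const C : recursive (fun _ => C).
Proof. by exists (const_prog C) => x; exact: eval_const. Qed.

Lemma recursive_step M C D : recursive (fun k => if M <= k then C else D).
Proof. by exists (step_prog M C D) => k; exact: eval_step. Qed.

Definition zero_rep (m n : nat) : nat -> nat -> nat -> nat :=
  fun T c _ => if (T < 2 * (m * n)) && (c == 1) then 1 else 0.

(* On slot 0, the real part of entry (0,0), the name switches at precision [M]
   from 0/1, as in [zero_rep], to the exact value 1/2^M. *)
Definition delta_rep (m n M : nat) : nat -> nat -> nat -> nat :=
  fun T c k => if (T == 0) && (M <= k) then nth 0 [:: 1; 2 ^ M] c else zero_rep m n T c k.

Lemma agree_below_delta_rep m n M : agree_below M (zero_rep m n) (delta_rep m n M).
Proof. by move=> T c k _ _ lt_kM; rewrite /delta_rep leqNgt lt_kM andbF. Qed.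

Lemma re_im_idx_lt m n (i : 'I_m) (j : 'I_n) :
  re_idx n i j < 2 * (m * n) /\ im_idx n i j < 2 * (m * n).
Proof. by have := ltn_ord i; have := ltn_ord j; rewrite /re_idx /im_idx; split; nia. Qed.

Local Open Scope ring_scope.
Local Open Scope complex_scope.
Local Notation normc := Normc.normc.

Section Representations.
Variable R : realType.

Lemma real_rep_ext (x : R) a b s a' b' s' :
  a =1 a' -> b =1 b' -> s =1 s' -> real_rep x a b s -> real_rep x a' b' s'.
Proof.
move=> ea eb es [[pa ha] [pb hb] [ps hs] hb0 happ]; split.
- by exists pa => k; rewrite -ea.
- by exists pb => k; rewrite -eb.
- by exists ps => k; rewrite -es.
- by move=> k; rewrite -eb.
- by move=> k; rewrite -ea -eb -es.
Qed.

Lemma real_rep0 : real_rep (0 : R) (fun _ => 0%N) (fun _ => 1%N) (fun _ => 0%N).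
Proof.
split; try exact: recursive_const; first by [].
by move=> k; rewrite /rat_val mulr0 mul0r subr0 normr0 invr_ge0 exprn_ge0.
Qed.

Lemma real_rep_pow2 (M : nat) :
  real_rep ((2%:R ^+ M)^-1 : R) (fun k => if (M <= k)%N then 1%N else 0%N)
    (fun k => if (M <= k)%N then (2 ^ M)%N else 1%N) (fun _ => 0%N).
Proof.
split; [exact: recursive_step | exact: recursive_step | exact: recursive_const | |].
  by move=> k; case: leqP => // _; apply/eqP; rewrite expn_eq0.
move=> k; rewrite /rat_val expr0 mul1r; case: leqP => [le_Mk|lt_kM].
  by rewrite mul1r natrX subrr normr0 invr_ge0 exprn_ge0.
rewrite mul0r sub0r normrN ger0_norm ?invr_ge0 ?exprn_ge0 //.
by rewrite lef_pV2 ?posrE ?exprn_gt0 // ler_eXn2l ?ltr1n // ltnW.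
Qed.

Lemma real_rep_first_approx (x : R) a b s : real_rep x a b s ->
  `|x| <= `|rat_val (a 0%N) (b 0%N) (s 0%N) : R| + 1.
Proof.
case=> _ _ _ _ /(_ 0%N); rewrite expr0 invr1; set r := rat_val _ _ _ => h.
have := ler_normD (x - r) r; rewrite subrK distrC; lra.
Qed.

Lemma real_rep_zero_rep m n T : (T < 2 * (m * n))%N ->
  real_rep (0 : R) (zero_rep m n T 0) (zero_rep m n T 1) (zero_rep m n T 2).
Proof. by move=> lt_T; apply: real_rep_ext real_rep0 => k; rewrite /zero_rep lt_T. Qed.

Lemma zero_rep_out m n T c k : (2 * (m * n) <= T)%N \/ (3 <= c)%N -> zero_rep m n T c k = 0%N.
Proof.
rewrite /zero_rep => -[le_T | le_c]; first by rewrite ltnNge le_T.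
by case: ifP => // /andP[_ /eqP c1]; rewrite c1 in le_c.
Qed.

Lemma mx_rep_zero m n : mx_rep (0 : 'M[R[i]]_(m, n)) (zero_rep m n).
Proof.
split=> [i j | i j | T c k]; last exact: zero_rep_out.
- by rewrite mxE; exact: real_rep_zero_rep (re_im_idx_lt i j).1.
- by rewrite mxE; exact: real_rep_zero_rep (re_im_idx_lt i j).2.
Qed.

Lemma mx_rep_delta m n M :
  mx_rep ((2%:R ^+ M)^-1%:C *: delta_mx ord0 ord0 : 'M[R[i]]_(m.+1, n.+1))
    (delta_rep m.+1 n.+1 M).
Proof.
have pos_mn : (0 < 2 * (m.+1 * n.+1))%N by rewrite !muln_gt0.
have delta_rep_zero T c k : T != 0%N -> delta_rep m.+1 n.+1 M T c k = zero_rep m.+1 n.+1 T c k.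
  by move=> /negPf T0; rewrite /delta_rep T0.
split=> [i j | i j | T c k].
- rewrite !mxE; have [/andP[/eqP -> /eqP ->] | not00] := boolP ((i == ord0) && (j == ord0)).
    have -> : re_idx n.+1 (@ord0 m) (@ord0 n) = 0%N by [].
    rewrite mulr1; apply: real_rep_ext (real_rep_pow2 M) => k;
      by rewrite /delta_rep /zero_rep pos_mn; case: leqP.
  have re_ij0 : re_idx n.+1 i j != 0%N.
    apply: contra not00; rewrite /re_idx => /eqP ij0.
    by apply/andP; split; apply/eqP/val_inj => /=; nia.
  rewrite mulr0; apply: real_rep_ext (real_rep_zero_rep (re_im_idx_lt i j).1) => k;
    by rewrite delta_rep_zero.
- rewrite !mxE; have -> : forall b : bool, complex.Im ((2%:R ^+ M)^-1%:C * b%:R) = 0 :> R.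
    by case; rewrite ?mulr1 ?mulr0.
  apply: real_rep_ext (real_rep_zero_rep (re_im_idx_lt i j).2) => k;
    by rewrite delta_rep_zero.
- move=> out; rewrite /delta_rep; case: ifP => [/andP[/eqP T0 _] | _];
    last exact: zero_rep_out.
  by case: out => [|le_c]; [rewrite T0 leqNgt pos_mn | case: c le_c => [|[|[|c]]]].
Qed.

End Representations.

Section ComplexNorm.
Variable R : realType.

Lemma normcE (z : R[i]) : normc z = Num.sqrt (complex.Re z ^+ 2 + complex.Im z ^+ 2).
Proof. by case: z. Qed.

Lemma normc_ge0 (z : R[i]) : 0 <= normc z.
Proof. by rewrite normcE sqrtr_ge0. Qed.

Lemma normc_le_ReIm (z : R[i]) : normc z <= `|complex.Re z| + `|complex.Im z|.
Proof.
rewrite normcE -[leRHS]ger0_norm ?addr_ge0 // -sqrtr_sqr ler_wsqrtr //.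
rewrite -(real_normK (num_real (complex.Re z))) -(real_normK (num_real (complex.Im z))).
by rewrite sqrrD -addrA lerD2l lerDr mulrn_wge0 ?mulr_ge0.
Qed.

Lemma normc_real (t : R) : 0 <= t -> normc t%:C = t.
Proof. by move=> t_ge0; rewrite normcE /= expr0n addr0 sqrtr_sqr ger0_norm. Qed.

End ComplexNorm.

Lemma BT_computable_bounded_near (R : realType) m n p q
    (G : 'M[R[i]]_(m, n) -> 'M[R[i]]_(p, q)) (A : 'M[R[i]]_(m, n)) rho (i : 'I_p) (j : 'I_q) :
  BT_computable G -> mx_rep A rho ->
  exists K B, forall A' rho', mx_rep A' rho' -> agree_below K rho rho' ->
    normc (G A' i j) <= B.
Proof.
move=> [P HP] /HP [sigma [Hev _]].
pose slot (b : bool) := if b then im_idx q i j else re_idx q i j.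
have [K HK] := eval_use_fin (fun x : (bool * 'I_3)%type => Hev (slot x.1) x.2 0%N).
pose approx (s : nat -> nat -> nat -> nat) b : R :=
  rat_val (s (slot b) 0%N 0%N) (s (slot b) 1%N 0%N) (s (slot b) 2%N 0%N).
exists K, ((`|approx sigma false| + 1) + (`|approx sigma true| + 1)).
move=> A' rho' /HP [sigma' [Hev' [hRe hIm _]]] agree_K.
have same_approx b : approx sigma' b = approx sigma b.
  have E c : (c < 3)%N -> sigma' (slot b) c 0%N = sigma (slot b) c 0%N.
    by move=> lt_c3; exact: eval_functional (Hev' _ _ _) (HK _ agree_K (b, Ordinal lt_c3)).
  by rewrite /approx !E.
apply: le_trans (normc_le_ReIm _) _; apply: lerD.
  by rewrite -(same_approx false); exact: real_rep_first_approx (hRe i j).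
by rewrite -(same_approx true); exact: real_rep_first_approx (hIm i j).
Qed.

Lemma mul_delta_mxE (C : pzSemiRingType) m n p q (X : 'M[C]_(m, n)) (Y : 'M[C]_(p, q))
    (i0 : 'I_n) (j0 : 'I_p) i j :
  (X *m delta_mx i0 j0 *m Y) i j = X i i0 * Y j0 j.
Proof.
rewrite -(mul_delta_mx (0 : 'I_1)) mulmxA -mulmxA -colE -rowE.
by rewrite mxE big_ord1 !mxE.
Qed.

Lemma delta_mul_delta_mxE (C : pzSemiRingType) m n p q (Y : 'M[C]_(n, p))
    (i0 : 'I_m) (j0 : 'I_n) (k0 : 'I_p) (l0 : 'I_q) :
  (delta_mx i0 j0 *m Y *m delta_mx k0 l0) i0 l0 = Y j0 k0.
Proof.
rewrite -[_ *m delta_mx k0 l0]mulmx1 mul_delta_mxE -[delta_mx i0 j0]mul1mx.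
by rewrite mul_delta_mxE !mxE !eqxx mul1r mulr1.
Qed.

Section ScaledDelta.
Variables (R : realType) (m n : nat) (a : R[i]) (i0 : 'I_m) (j0 : 'I_n).
Local Notation A := (a *: delta_mx i0 j0 : 'M[R[i]]_(m, n)).

Lemma newton_iter_scale_delta (X0 : 'M[R[i]]_(n, m)) k :
  let x := newton_iter A X0 k j0 i0 in
  newton_iter A X0 k.+1 j0 i0 = 2%:R * x - x * a * x.
Proof.
move=> x /=; set Y := _ *m _ *m _.
have Y_ji : Y j0 i0 = x * a * x.
  by rewrite /Y -scalemxAr -scalemxAl mxE mul_delta_mxE mulrCA mulrA.
by rewrite [LHS]mxE [(- Y) _ _]mxE [X in X + _]mxE Y_ji.
Qed.

Lemma ctrmx_delta_diag p (k : 'I_p) : ctrmx (delta_mx k k : 'M[R[i]]_p) = delta_mx k k.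
Proof.
apply/matrixP => u v; rewrite !mxE andbC.
by case: (_ && _); rewrite /cconj /= ?oppr0.
Qed.

Lemma pinv_scale_delta : a != 0 -> pinv A j0 i0 = a^-1.
Proof.
move=> a_neq0; set X := a^-1 *: delta_mx j0 i0 : 'M[R[i]]_(n, m).
have AX : A *m X = delta_mx i0 i0.
  by rewrite -scalemxAl -scalemxAr mul_delta_mx scalerA divff // scale1r.
have XA : X *m A = delta_mx j0 j0.
  by rewrite -scalemxAl -scalemxAr mul_delta_mx scalerA mulVf // scale1r.
have MP_X : is_MP_pinv A X.
  split; rewrite ?AX ?XA ?ctrmx_delta_diag //.
    by rewrite -scalemxAr mul_delta_mx.
  by rewrite -scalemxAr mul_delta_mx.
have [AYA _ _ _] : is_MP_pinv A (pinv A) := xgetPex 0 (ex_intro _ X MP_X).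
have := congr1 (fun M : 'M[R[i]]_(m, n) => M i0 j0) AYA.
rewrite /= -scalemxAr -!scalemxAl scalerA [LHS]mxE delta_mul_delta_mxE.
rewrite !mxE !eqxx mulr1 => aaY.
by apply: (mulfI a_neq0); rewrite divff //; apply: (mulfI a_neq0); rewrite mulr1 mulrA.
Qed.

End ScaledDelta.

Section SpectralNorm.
Variable R : realType.

Lemma vnorm2E n (v : 'cV[R[i]]_n) : vnorm2 v = Num.sqrt (\sum_i normc (v i 0) ^+ 2).
Proof.
congr Num.sqrt; apply: eq_bigr => i _.
by rewrite normcE sqr_sqrtr // addr_ge0 ?sqr_ge0.
Qed.

Lemma normc_le_vnorm2 n (v : 'cV[R[i]]_n) i : normc (v i 0) <= vnorm2 v.
Proof.
rewrite vnorm2E -[leLHS]ger0_norm ?normc_ge0 // -sqrtr_sqr ler_wsqrtr //.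
by rewrite (bigD1 i) //= lerDl sumr_ge0 // => j _; exact: sqr_ge0.
Qed.

Lemma normc_sum_le (I : Type) (r : seq I) (F : I -> R[i]) :
  normc (\sum_(k <- r) F k) <= \sum_(k <- r) normc (F k).
Proof.
apply: (big_rec2 (fun z b => normc z <= b)); first by rewrite Normc.normc0.
by move=> k z b _ le_zb; apply: le_trans (le_normcD _ _) _; exact: lerD.
Qed.

Lemma has_ubound_specnorm m n (M : 'M[R[i]]_(m, n)) :
  has_ubound [set vnorm2 (M *m v) | v in [set v : 'cV[R[i]]_n | vnorm2 v = 1]].
Proof.
exists (Num.sqrt (\sum_i (\sum_j normc (M i j)) ^+ 2)) => _ [v /= v1 <-].
rewrite vnorm2E ler_wsqrtr // ler_sum // => i _.
rewrite ler_sqr ?nnegrE ?normc_ge0 ?sumr_ge0 // => [|j _]; last exact: normc_ge0.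
rewrite mxE; apply: le_trans (normc_sum_le _ _) _; apply: ler_sum => j _.
rewrite Normc.normcM ler_piMr ?normc_ge0 //.
by rewrite -v1; exact: normc_le_vnorm2.
Qed.

Lemma normc_le_specnorm m n (M : 'M[R[i]]_(m, n)) i j : normc (M i j) <= specnorm M.
Proof.
have e_j1 : vnorm2 (delta_mx j 0 : 'cV[R[i]]_n) = 1.
  rewrite vnorm2E (bigD1 j) //= big1 => [|k /negPf kj]; last first.
    by rewrite mxE kj Normc.normc0 expr0n.
  by rewrite mxE !eqxx Normc.normc1 expr1n addr0 sqrtr1.
have in_set :
    [set vnorm2 (M *m v) | v in [set v | vnorm2 v = 1]]%classic (vnorm2 (col j M)).
  by exists (delta_mx j 0); rewrite // colE.
have := normc_le_vnorm2 (col j M) i; rewrite mxE => /le_trans; apply.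
apply: (sup_upper_bound _ in_set); split; last exact: has_ubound_specnorm.
by exists (vnorm2 (col j M)).
Qed.
End SpectralNorm.

Section NewtonSchulzScalar.
Variable R : realType.

(* [|2 x - t x^2| <= 3 |x|] as long as [t |x| <= 1]. *)
Lemma newton_recip_iter_le (t c : R) (x : nat -> R[i]) k :
  0 <= t -> normc (x 0%N) <= c -> t * (3%:R ^+ k * c) <= 1 ->
  (forall j, x j.+1 = 2%:R * x j - x j * t%:C * x j) ->
  normc (x k) <= 3%:R ^+ k * c.
Proof.
move=> t_ge0 x0_le tk_le x_succ.
have c_ge0 : 0 <= c := le_trans (normc_ge0 _) x0_le.
have normc2 : normc (2%:R : R[i]) = 2%:R by rewrite -(rmorph_nat (real_complex R)) normc_real ?ler0n.
suff: forall j, (j <= k)%N -> normc (x j) <= 3%:R ^+ j * c by apply.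
elim=> [|j IH] lt_jk; first by rewrite expr0 mul1r.
have {IH} xj_le := IH (ltnW lt_jk).
have txj_le : t * normc (x j) <= 1.
  apply: le_trans tk_le; rewrite ler_wpM2l // (le_trans xj_le) // ler_wpM2r //.
  by rewrite ler_eXn2l ?ltr1n // ltnW.
have xj_ge0 := normc_ge0 (x j).
rewrite x_succ; apply: le_trans (le_normcD _ _) _.
rewrite normcN !Normc.normcM normc_real // normc2 exprS -mulrA; nra.
Qed.

End NewtonSchulzScalar.

Lemma newton_scale_delta_error (R : realType) m n (i0 : 'I_m) (j0 : 'I_n) (t c : R)
    (X0 : 'M[R[i]]_(n, m)) k :
  let A := t%:C *: delta_mx i0 j0 in
  0 < t -> normc (X0 j0 i0) <= c -> 3%:R ^+ k * c <= t^-1 ->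
  t^-1 - 3%:R ^+ k * c <= specnorm (pinv A - newton_iter A X0 k).
Proof.
move=> A t_gt0 X0_le le_tinv; rewrite {}/A.
have tC_neq0 : t%:C != 0 by rewrite (inj_eq (@complexI R)) gt_eqF.
apply: le_trans (normc_le_specnorm _ j0 i0); rewrite !mxE pinv_scale_delta //.
set x := newton_iter _ X0 k j0 i0.
have x_le : Normc.normc x <= 3%:R ^+ k * c.
  apply: newton_recip_iter_le (ltW t_gt0) X0_le _
    (newton_iter_scale_delta t%:C i0 j0 X0).
  by rewrite -ler_pdivlMl // mulr1.
have := le_normcD ((t%:C)^-1 - x) x.
by rewrite subrK Normc.normcV (normc_real (ltW t_gt0)); lra.
Qed.

Lemma ex_pow2_ge (R : archiRealFieldType) (x : R) K : exists2 M, (K <= M)%N & x <= 2%:R ^+ M.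
Proof.
exists (K + Num.bound `|x|)%N; first exact: leq_addr.
apply: le_trans (ler_norm x) _; apply/ltW/(lt_le_trans (archi_boundP (normr_ge0 x))).
rewrite -natrX ler_nat (leq_trans _ (ltnW (ltn_expl _ (ltnSn 1)))) //; exact: leq_addl.
Qed.

Theorem corollary3p5 (R : realType) (m n : nat) (hm : (2 <= m)%N) (hn : (2 <= n)%N) :
  ~ exists G : 'M[R[i]]_(m, n) -> 'M[R[i]]_(n, m),
      BT_computable G /\
      exists e : nat -> nat, recursive e /\
        forall A : 'M[R[i]]_(m, n), computable_mx A ->
        forall N k : nat, (e N <= k)%N ->
          specnorm (pinv A - newton_iter A (G A) k) <= 2%:R ^- N.
Proof.
case: m hm => // m _; case: n hn => // n _; move=> [G [BT_G [e [_ conv]]]].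
have [K [B G_bounded]] := BT_computable_bounded_near ord0 ord0 BT_G (mx_rep_zero R m.+1 n.+1).
set k := e 1%N.
have [M le_KM pow2_M] := ex_pow2_ge (3%:R ^+ k * B + 1 : R) K.
set t := ((2%:R ^+ M)^-1 : R).
have t_gt0 : 0 < t by rewrite invr_gt0 exprn_gt0.
set A : 'M[R[i]]_(m.+1, n.+1) := t%:C *: delta_mx ord0 ord0.
have repA : mx_rep A (delta_rep m.+1 n.+1 M) := mx_rep_delta R m n M.
have GA_le : normc (G A ord0 ord0) <= B.
  exact: G_bounded repA (agree_below_le le_KM (@agree_below_delta_rep m.+1 n.+1 M)).
have := newton_scale_delta_error (k := k) t_gt0 GA_le.
have := conv _ (ex_intro _ _ repA) 1%N k (leqnn _).
rewrite /t invrK expr1; lra.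
Qed.
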